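(* Let $k$ be a positive integer and $x$ an integer with $2\le x\le p^k-1$ (i.e. $x\in\mathbb{Z}_{p^k}\setminus\{0,1\}$). Let $N_x$ be the least period of the sequence $(T_n^i(x)\bmod p)_{i\ge 0}$, let $l_x$ be the multiplicative order modulo $p$ of the integer $T'_{n^{N_x}}(x)$, and let $$v=\max\{t : T_n^{N_x l_x}(x)\equiv x\pmod{p^t}\}.$$ If $k\ge v$, then the least period of the sequence $(T_n^i(x)\bmod p^k)_{i\ge0}$ equals $N_x\cdot l_x\cdot p^{k-v}$.
   Context: $p$ is a prime with $p>3$ and $n>1$ is an integer with $\gcd(n,p)=\gcd(n,p^2-1)=1$ (so $T_n$ permutes $\mathbb{Z}_{p^j}$ for all $j\ge1$). $T_d(x)\in\mathbb{Z}[x]$ is the Chebyshev polynomial of the first kind: $T_0=1$, $T_1=x$, $T_d=2xT_{d-1}-T_{d-2}$; $T'_d$ is its derivative. $T_n^i$ is the $i$-fold composition of $T_n$ ($T_n^0(x)=x$), computed over $\mathbb{Z}$; $T_n^i=T_{n^i}$. The least period of $(T_n^i(x)\bmod p^j)_{i\ge0}$ is the least positive integer $N$ with $T_n^N(x)\equiv x\pmod{p^j}$. *)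

From mathcomp Require Import all_boot all_order all_algebra.
Set Implicit Arguments. Unset Strict Implicit. Unset Printing Implicit Defensive.
Import Order.TTheory GRing.Theory Num.Theory.
Local Open Scope ring_scope.

Fixpoint cheb_pair (d : nat) : {poly int} * {poly int} :=
  match d with
  | 0%N => (1, 'X)
  | d'.+1 => let: (a, b) := cheb_pair d' in (b, 2%:P * 'X * b - a)
  end.

Definition cheb (d : nat) : {poly int} := (cheb_pair d).1.

Definition cheb_iter (n i : nat) (x : int) : int := iter i (fun y => (cheb n).[y]) x.

Definition is_least_period (n : nat) (m : int) (x : int) (N : nat) : Prop :=
  (0 < N)%N /\ (cheb_iter n N x == x %[mod m])%Z /\
  forall M : nat, (0 < M)%N -> (M < N)%N -> ~ (cheb_iter n M x == x %[mod m])%Z.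

Definition is_mult_order (a m : int) (l : nat) : Prop :=
  (0 < l)%N /\ (a ^+ l == 1 %[mod m])%Z /\
  forall M : nat, (0 < M)%N -> (M < l)%N -> ~ (a ^+ M == 1 %[mod m])%Z.

Definition is_max_cong_exp (p : nat) (a b : int) (v : nat) : Prop :=
  (a == b %[mod (p ^ v)%:Z])%Z /\
  forall t : nat, (a == b %[mod (p ^ t)%:Z])%Z -> (t <= v)%N.

From mathcomp Require Import all_boot all_order all_algebra.
From mathcomp Require Import ring zify.
Set Implicit Arguments. Unset Strict Implicit. Unset Printing Implicit Defensive.
Import Order.TTheory GRing.Theory Num.Theory.
Local Open Scope ring_scope.

(* Put F = T_n^N = T_(n^N), which fixes x modulo p, lam = F'(x) and D = F(x) - x.
   Taylor expansion gives F^j(x) - x = (1 + lam + ... + lam^(j-1)) D modulo p D, so a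
   return of F modulo p^v forces l | j.  For G = F^l we have G'(x) = 1 mod p, and a
   second-order expansion shows that if p^w exactly divides H(x) - x and H'(x) = 1 mod p,
   then H^p(x) - x = p (H(x) - x) modulo p^(w+2), because p > 3 divides both sums
   0 + 1 + ... + (p-1) and 0^2 + ... + (p-1)^2.  Hence the exact power of p dividing
   G^(p^s)(x) - x is p^(v+s), and the least period modulo p^k, which is N l times a
   divisor of p^(k-v), must be N l p^(k-v). *)

Section PolyIter.
Variable R : comNzRingType.

Definition poly_iter (T : {poly R}) (m : nat) : {poly R} := iter m (fun Q => T \Po Q) 'X.

Lemma horner_poly_iter T m y : (poly_iter T m).[y] = iter m (horner T) y.
Proof. by elim: m => [|m IH]; rewrite /= ?hornerX // horner_comp IH. Qed.

Lemma poly_iterD T m n : poly_iter T (m + n) = poly_iter T m \Po poly_iter T n.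
Proof.
elim: m => [|m IH]; first by rewrite comp_polyX.
by rewrite addSn /= IH comp_polyA.
Qed.

Lemma poly_iterM T m n : poly_iter T (m * n) = poly_iter (poly_iter T m) n.
Proof. by elim: n => [|n IH]; rewrite ?muln0 // mulnS poly_iterD IH. Qed.

End PolyIter.

(** * Chebyshev polynomials under composition *)

Lemma cheb0 : cheb 0 = 1. Proof. by []. Qed.
Lemma cheb1 : cheb 1 = 'X. Proof. by []. Qed.

Lemma chebSS d : cheb d.+2 = 2 * 'X * cheb d.+1 - cheb d.
Proof.
have pairE e : cheb_pair e = (cheb e, cheb e.+1).
  by elim: e => [//|e IH]; rewrite /cheb /= IH.
by rewrite {1}/cheb /= pairE polyC_natr.
Qed.

Lemma nat_ind2 (P : nat -> Prop) :
  P 0%N -> P 1%N -> (forall d, P d -> P d.+1 -> P d.+2) -> forall d, P d.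
Proof.
move=> P0 P1 PSS d; suff : P d /\ P d.+1 by case.
by elim: d => [|d [Pd PSd]]; split; last exact: PSS.
Qed.

Lemma cheb_mul_add_sub a b : (b <= a)%N ->
  2 * cheb a * cheb b = cheb (a + b) + cheb (a - b).
Proof.
move: a; elim/nat_ind2: b => [||b IHb IHSb] a le_ba.
- by rewrite cheb0 addn0 subn0; ring.
- case: a le_ba => // a _; rewrite cheb1 addn1 subn1 /=.
  case: a => [|a]; first by rewrite chebSS cheb1 cheb0; ring.
  by rewrite [cheb a.+3]chebSS; ring.
- rewrite chebSS.
  have -> : 2 * cheb a * (2 * 'X * cheb b.+1 - cheb b) =
    2 * 'X * (2 * cheb a * cheb b.+1) - 2 * cheb a * cheb b by ring.
  rewrite IHSb ?IHb; try lia.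
  have -> : (a + b.+2 = (a + b.+1).+1)%N by rewrite !addnS.
  have -> : (a - b = (a - b.+2).+2)%N by lia.
  have -> : (a - b.+1 = (a - b.+2).+1)%N by lia.
  by rewrite addnS [cheb (a + b).+2]chebSS [cheb (a - b.+2).+2]chebSS; ring.
Qed.

Lemma cheb_comp a b : cheb a \Po cheb b = cheb (a * b).
Proof.
elim/nat_ind2: a => [||a IHa IHSa]; first by rewrite cheb0 comp_polyC.
  by rewrite cheb1 comp_polyX mul1n.
rewrite chebSS comp_polyB !comp_polyM comp_polyX IHa IHSa.
have -> : 2%:R \Po cheb b = 2 :> {poly int} by rewrite -polyC_natr comp_polyC.
rewrite -mulrA [_ * cheb (a.+1 * b)]mulrC mulrA cheb_mul_add_sub ?leq_pmull //.
have -> : (a.+1 * b - b = a * b)%N by rewrite mulSn addKn.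
by rewrite addrK [(a.+2 * b)%N]mulSn addnC.
Qed.

Lemma poly_iter_cheb n m : poly_iter (cheb n) m = cheb (n ^ m).
Proof. by elim: m => [|m IH]; rewrite //= IH cheb_comp expnS. Qed.

(** * Taylor expansion over the integers *)

Lemma dvdz_horner_sub (H : {poly int}) y z : (y - z %| H.[y] - H.[z])%Z.
Proof.
have /factor_theorem [Q HQ] : root (H - H.[z]%:P) z by rewrite rootE !hornerE subrr.
have := congr1 (horner^~ y) HQ; rewrite !hornerE => ->.
exact: dvdz_mull.
Qed.

Lemma horner_eqz_mod (H : {poly int}) m : {homo horner H : y z / (y == z %[mod m])%Z}.
Proof. by move=> y z; rewrite !eqz_mod_dvd => /dvdz_trans; apply; apply: dvdz_horner_sub. Qed.

Lemma dvdz_taylor2 (H : {poly int}) x u :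
  (u ^+ 3 %| H.[x + u] - H.[x] - H^`().[x] * u - H^`N(2).[x] * u ^+ 2)%Z.
Proof.
rewrite (@nderiv_taylor_wide _ (size H).+3) ?leqW //; last exact: mulrC.
rewrite !big_ord_recl nderivn0 nderivn1 /= expr0 expr1 mulr1 /bump /= !addn0 !add1n.
set S := \sum_(i < _) _.
have -> : H.[x] + (H^`().[x] * u + (H^`N(2).[x] * u ^+ 2 + S)) - H.[x]
  - H^`().[x] * u - H^`N(2).[x] * u ^+ 2 = S by ring.
by apply: rpred_sum => i _; rewrite !add1n -addn3 exprD; apply/dvdz_mull/dvdz_mull/dvdzz.
Qed.

Lemma dvdz_taylor1 (H : {poly int}) x u :
  (u ^+ 2 %| H.[x + u] - H.[x] - H^`().[x] * u)%Z.
Proof.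
have -> : H.[x + u] - H.[x] - H^`().[x] * u =
  (H.[x + u] - H.[x] - H^`().[x] * u - H^`N(2).[x] * u ^+ 2) + H^`N(2).[x] * u ^+ 2.
  by rewrite subrK.
apply: rpredD; last exact/dvdz_mull/dvdzz.
exact: dvdz_trans (dvdz_exp2l _ _) (dvdz_taylor2 H x u).
Qed.

(* [is_least_period n m x N] is [is_iter_period (horner (cheb n)) m x N] by conversion. *)
Definition is_iter_period (h : int -> int) (m x : int) (P : nat) : Prop :=
  (0 < P)%N /\ (iter P h x == x %[mod m])%Z /\
  forall M : nat, (0 < M)%N -> (M < P)%N -> ~ (iter M h x == x %[mod m])%Z.

Section IterPeriod.
Variables (h : int -> int) (m x : int).
Hypothesis h_eqz_mod : {homo h : a b / (a == b %[mod m])%Z}.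

Lemma iter_eqz_mod j a b : (a == b %[mod m])%Z -> (iter j h a == iter j h b %[mod m])%Z.
Proof. by move=> ab; elim: j => //= j; apply: h_eqz_mod. Qed.

Lemma iter_mul_return P k :
  (iter P h x == x %[mod m])%Z -> (iter (k * P) h x == x %[mod m])%Z.
Proof.
move=> /eqP retP; elim: k => [//|k IH].
by rewrite mulSn iterD; apply/eqP; rewrite -retP; apply/eqP/iter_eqz_mod.
Qed.

Lemma iter_period_dvd P j :
  is_iter_period h m x P -> (iter j h x == x %[mod m])%Z = (P %| j)%N.
Proof.
move=> [P_gt0 [retP minP]]; apply/idP/idP => [/eqP retj|/dvdnP [k ->]]; last first.
  exact: iter_mul_return.
have retr : (iter (j %% P) h x == x %[mod m])%Z.
  have /eqP := iter_eqz_mod (j %% P) (iter_mul_return (j %/ P) retP).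
  by rewrite -iterD addnC -divn_eq retj => <-.
by apply/negPn/negP => ndvd; apply: (minP (j %% P)%N); rewrite ?lt0n ?ltn_pmod.
Qed.

Lemma exists_iter_period j : (0 < j)%N -> (iter j h x == x %[mod m])%Z ->
  exists P, is_iter_period h m x P.
Proof.
move=> j_gt0 retj; have ex : exists j, (0 < j)%N && (iter j h x == x %[mod m])%Z.
  by exists j; rewrite j_gt0.
case: (ex_minnP ex) => P /andP [P_gt0 retP] minP; exists P.
split=> //; split=> // M M_gt0 ltMP retM.
by have := minP M; rewrite M_gt0 retM leqNgt ltMP => /(_ isT).
Qed.

End IterPeriod.

Lemma mult_order_dvd a m l j :
  is_mult_order a m l -> (a ^+ j == 1 %[mod m])%Z = (l %| j)%N.
Proof.
move=> ord_a; rewrite -iter_mulr_1; apply: iter_period_dvd.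
  by move=> b c; rewrite !eqz_mod_dvd -mulrBr; apply: dvdz_mull.
case: ord_a => l_gt0 [retl minl]; rewrite /is_iter_period iter_mulr_1.
by split=> //; split=> // M; rewrite iter_mulr_1; apply: minl.
Qed.

Lemma geom_sumS (R : pzSemiRingType) (a : R) j : \sum_(i < j.+1) a ^+ i = 1 + a * \sum_(i < j) a ^+ i.
Proof.
rewrite big_ord_recl expr0 mulr_sumr; congr (_ + _).
by apply: eq_bigr => i _; rewrite exprS.
Qed.

Section FirstOrder.
Variables (H : {poly int}) (x q : int).
Hypothesis q_dvd_disp : (q %| H.[x] - x)%Z.
Local Notation D := (H.[x] - x).
Local Notation lam := (H^`().[x]).

Lemma iter_sub_first_order j :
  (q * D %| iter j (horner H) x - x - (\sum_(i < j) lam ^+ i) * D)%Z.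
Proof.
elim: j => [|j IH]; first by rewrite big_ord0 /= subrr mul0r subr0 dvdz0.
set u := iter j (horner H) x - x in IH *.
have D_dvd_u : (D %| u)%Z.
  rewrite -[u](subrK ((\sum_(i < j) lam ^+ i) * D)).
  by apply: rpredD; [apply: dvdz_trans IH; apply/dvdz_mull/dvdzz | apply/dvdz_mull/dvdzz].
have -> : iter j.+1 (horner H) x - x - (\sum_(i < j.+1) lam ^+ i) * D =
    (H.[x + u] - H.[x] - lam * u) + lam * (u - (\sum_(i < j) lam ^+ i) * D).
  have xu : x + u = iter j (horner H) x by rewrite addrC subrK.
  by rewrite geom_sumS /= -xu; ring.
apply: rpredD; last exact: dvdz_mull.
apply: dvdz_trans (dvdz_taylor1 H x u).
by rewrite expr2 dvdz_mul // (dvdz_trans q_dvd_disp).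
Qed.

Lemma dvdz_iter_sub j : (q %| iter j (horner H) x - x)%Z.
Proof.
rewrite -[_ - x](subrK ((\sum_(i < j) lam ^+ i) * D)); apply: rpredD.
  exact: dvdz_trans (dvdz_mulr _ (dvdzz q)) (iter_sub_first_order j).
exact: dvdz_mull.
Qed.

End FirstOrder.

Lemma Euclid_dvdzM (p : nat) (a b : int) : prime p ->
  (p%:Z %| a * b)%Z = (p%:Z %| a)%Z || (p%:Z %| b)%Z.
Proof. by move=> p_prime; rewrite !dvdzE abszM Euclid_dvdM. Qed.

Lemma coprimez_pexp (p k : nat) (a : int) : prime p ->
  ~~ (p%:Z %| a)%Z -> coprimez (p%:Z ^+ k) a.
Proof. by move=> p_prime pNa; apply: coprimezXl; rewrite coprimezE prime_coprime. Qed.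

Section MultOrder.
Variables (p : nat) (lam : int) (l : nat).
Hypotheses (p_prime : prime p) (ord_lam : is_mult_order lam p l).

Lemma order_dvd_of_dvd_geom_sum j : (p%:Z %| \sum_(i < j) lam ^+ i)%Z -> (l %| j)%N.
Proof.
by move=> p_dvd_S; rewrite -(mult_order_dvd j ord_lam) eqz_mod_dvd subrX1 dvdz_mull.
Qed.

Lemma dvdz_geom_sum_order : (1 < l)%N -> (p%:Z %| \sum_(i < l) lam ^+ i)%Z.
Proof.
case: ord_lam => _ [retl minl] l_gt1.
move: retl; rewrite eqz_mod_dvd subrX1 Euclid_dvdzM // => /orP [p_dvd_lam1 | //].
by case: (minl 1%N) => //; rewrite eqz_mod_dvd expr1.
Qed.

End MultOrder.

Section PrimeReturn.
Variables (p : nat) (H : {poly int}) (x : int).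
Local Notation q := p%:Z.
Local Notation D := (H.[x] - x).
Local Notation lam := (H^`().[x]).
Hypotheses (p_prime : prime p) (p_dvd_disp : (q %| D)%Z).

Lemma dvdz_disp_of_iter_sub m v : ~~ (q %| \sum_(i < m) lam ^+ i)%Z ->
  (q ^+ v %| iter m (horner H) x - x)%Z -> (q ^+ v %| D)%Z.
Proof.
move=> pNS; have [t ht] := dvdzP (iter_sub_first_order p_dvd_disp m).
have -> : iter m (horner H) x - x = D * (\sum_(i < m) lam ^+ i + t * q).
  by rewrite -[LHS](subrK ((\sum_(i < m) lam ^+ i) * D)) ht; ring.
rewrite Gauss_dvdzl // coprimez_pexp //; apply: contra pNS => p_dvd.
by rewrite -(addrK (t * q) (\sum_(i < m) lam ^+ i)) rpredB // dvdz_mull.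
Qed.

Lemma order_dvd_of_iter_return l v m : is_mult_order lam p l ->
    ~ (q ^+ v.+1 %| iter l (horner H) x - x)%Z ->
  (q ^+ v %| iter m (horner H) x - x)%Z -> (l %| m)%N.
Proof.
move=> ord_lam not_retl retm; apply/negPn/negP => lNm; apply: not_retl.
have l_gt1 : (1 < l)%N.
  by case: ord_lam lNm => l_gt0 _; case: l l_gt0 => [|[|l]] //; rewrite dvd1n.
have pNS : ~~ (q %| \sum_(i < m) lam ^+ i)%Z.
  by apply: contra lNm; apply: order_dvd_of_dvd_geom_sum.
have qvD := dvdz_disp_of_iter_sub pNS retm.
have qD_retl : (q * D %| iter l (horner H) x - x)%Z.
  rewrite -[_ - x](subrK ((\sum_(i < l) lam ^+ i) * D)).
  apply: rpredD; first exact: iter_sub_first_order.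
  by rewrite dvdz_mul // dvdz_geom_sum_order.
apply: dvdz_trans qD_retl; rewrite exprS dvdz_mul2l //.
by rewrite eqz_nat -lt0n prime_gt0.
Qed.

End PrimeReturn.

(** * Lifting exact powers of p *)

Lemma prime_dvd_sum_nat p : prime p -> (2 < p)%N -> (p %| \sum_(i < p) i)%N.
Proof.
by move=> p_prime p_gt2; rewrite -(big_mkord xpredT id) bin2_sum prime_dvd_bin.
Qed.

Lemma prime_dvd_sum_sq p : prime p -> (3 < p)%N -> (p %| \sum_(i < p) i ^ 2)%N.
Proof.
move=> p_prime p_gt3.
have sum_sqE n : (6 * \sum_(i < n) i ^ 2 = n * n.-1 * (2 * n).-1)%N.
  elim: n => [|n IH]; first by rewrite big_ord0.
  by rewrite big_ord_recr /= mulnDr IH; case: n {IH} => //= n; nia.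
have p_cop6 : coprime p 6.
  rewrite prime_coprime //; apply/negP => p_dvd6.
  have := dvdn_leq (isT : (0 < 6)%N) p_dvd6.
  by case: p p_prime p_gt3 p_dvd6 => [|[|[|[|[|[|[|]]]]]]].
by rewrite -(Gauss_dvdr _ p_cop6) sum_sqE -mulnA dvdn_mulr.
Qed.

Section Lifting.
Variables (p : nat) (H : {poly int}) (x : int) (w : nat).
Local Notation q := p%:Z.
Local Notation D := (H.[x] - x).
Local Notation lam := (H^`().[x]).
Local Notation c := (H^`N(2).[x]).
Local Notation phi j := (iter j (horner H) x - x).
Hypotheses (p_prime : prime p) (w_gt0 : (0 < w)%N).
Hypotheses (qw_dvd_disp : (q ^+ w %| D)%Z) (q_dvd_lam1 : (q %| lam - 1)%Z).

Lemma iter_sub_linear j : (q ^+ w.+1 %| phi j - j%:R * D)%Z.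
Proof.
have q_dvd_disp : (q %| D)%Z by apply: dvdz_trans qw_dvd_disp; apply: dvdz_exp.
have -> : phi j - j%:R * D =
    (phi j - (\sum_(i < j) lam ^+ i) * D) + (\sum_(i < j) (lam ^+ i - 1)) * D.
  by rewrite sumrB sumr_const card_ord; ring.
rewrite exprS; apply: rpredD.
  exact: dvdz_trans (dvdz_mul (dvdzz q) qw_dvd_disp) (iter_sub_first_order _ _).
apply: dvdz_mul => //; apply: rpred_sum => i _.
by rewrite subrX1; apply: dvdz_mulr.
Qed.

Lemma iter_sub_step j :
  (q ^+ w.+2 %| phi j.+1 - phi j - (D + (lam - 1) * D * j%:R + c * D ^+ 2 * j%:R ^+ 2))%Z.
Proof.
set u := phi j; have lin_u := iter_sub_linear j; rewrite -/u in lin_u.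
have qw_dvd_u : (q ^+ w %| u)%Z.
  rewrite -[u](subrK (j%:R * D)); apply: rpredD; last exact: dvdz_mull.
  by apply: dvdz_trans lin_u; apply: dvdz_exp2l.
have xu : x + u = iter j (horner H) x by rewrite addrC subrK.
have -> : phi j.+1 - u - (D + (lam - 1) * D * j%:R + c * D ^+ 2 * j%:R ^+ 2) =
    (H.[x + u] - H.[x] - lam * u - c * u ^+ 2) + (lam - 1) * (u - j%:R * D)
    + c * ((u - j%:R * D) * (u + j%:R * D)).
  by rewrite /= -xu; ring.
apply: rpredD; first apply: rpredD.
- apply: dvdz_trans (dvdz_taylor2 H x u).
  apply: dvdz_trans (dvdz_exp2r 3 qw_dvd_u); rewrite -exprM dvdz_exp2l //; lia.
- by rewrite exprS dvdz_mul.
- apply/dvdz_mull/(dvdz_trans (dvdz_exp2l _ (_ : w.+2 <= w.+1 + w)%N)); first lia.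
  by rewrite exprD dvdz_mul // rpredD // dvdz_mull.
Qed.

Lemma iter_sub_prime : (3 < p)%N -> (q ^+ w.+2 %| phi p - p%:R * D)%Z.
Proof.
move=> p_gt3.
pose a j := D + (lam - 1) * D * j%:R + c * D ^+ 2 * j%:R ^+ 2.
have phi_sum : phi p = \sum_(j < p) (phi j.+1 - phi j).
  by rewrite -(big_mkord xpredT (fun j => phi j.+1 - phi j)) telescope_sumr //= subrr subr0.
have -> : phi p - p%:R * D = \sum_(j < p) (phi j.+1 - phi j - a j)
    + (lam - 1) * D * (\sum_(j < p) j)%:R + c * D ^+ 2 * (\sum_(j < p) j ^ 2)%:R.
  have sum_a : \sum_(j < p) a j = p%:R * D + (lam - 1) * D * (\sum_(j < p) j)%:R
      + c * D ^+ 2 * (\sum_(j < p) j ^ 2)%:R.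
    rewrite big_split big_split /= sumr_const card_ord -!mulr_sumr !natr_sum mulr_natl.
    by congr (_ + _ * _); apply: eq_bigr => j _; rewrite natrX.
  by rewrite sumrB -phi_sum sum_a; ring.
have q_dvd_sum (s : nat) : (p %| s)%N -> (q %| s%:R)%Z by rewrite natz.
apply: rpredD; first apply: rpredD.
- by apply: rpred_sum => j _; apply: iter_sub_step.
- by rewrite exprSr exprS !dvdz_mul // q_dvd_sum // prime_dvd_sum_nat //; lia.
- apply: (dvdz_trans (dvdz_exp2l _ (_ : w.+2 <= w * 2 + 1)%N)); first lia.
  rewrite exprD expr1 exprM -mulrA dvdz_mull // dvdz_mul ?dvdz_exp2r //.
  by rewrite q_dvd_sum // prime_dvd_sum_sq.
Qed.
End Lifting.

Lemma PoszX (n k : nat) : (n ^ k)%:Z = n%:Z ^+ k.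
Proof. by rewrite -natz natrX natz. Qed.

Lemma is_max_cong_expE p a b v : is_max_cong_exp p a b v <->
  (p%:Z ^+ v %| a - b)%Z /\ forall t, (p%:Z ^+ t %| a - b)%Z -> (t <= v)%N.
Proof.
have modE t : (a == b %[mod (p ^ t)%:Z])%Z = (p%:Z ^+ t %| a - b)%Z.
  by rewrite eqz_mod_dvd PoszX.
rewrite /is_max_cong_exp modE; split=> -[-> maxv]; split=> // t.
  by rewrite -modE; apply: maxv.
by rewrite modE; apply: maxv.
Qed.

Lemma is_max_cong_exp_iter_prime p (H : {poly int}) x w :
    prime p -> (3 < p)%N -> (0 < w)%N -> (p%:Z %| H^`().[x] - 1)%Z ->
  is_max_cong_exp p H.[x] x w -> is_max_cong_exp p (iter p (horner H) x) x w.+1.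
Proof.
move=> p_prime p_gt3 w_gt0 q_dvd_lam1 /is_max_cong_expE [qw_dvd maxw].
have lift := iter_sub_prime p_prime w_gt0 qw_dvd q_dvd_lam1 p_gt3.
have qw1_dvd_pD : (p%:Z ^+ w.+1 %| p%:R * (H.[x] - x))%Z by rewrite natz exprS dvdz_mul.
apply/is_max_cong_expE; split=> [|t qt_dvd].
  rewrite -[_ - x](subrK (p%:R * (H.[x] - x))) rpredD //.
  exact: dvdz_trans (dvdz_exp2l _ _) lift.
rewrite leqNgt; apply/negP => lt_w1t.
have : (p%:Z ^+ w.+2 %| p%:R * (H.[x] - x))%Z.
  rewrite -[p%:R * _](subKr (iter p (horner H) x - x)) rpredB //.
  exact: dvdz_trans (dvdz_exp2l _ lt_w1t) qt_dvd.
rewrite natz exprS dvdz_mul2l ?eqz_nat -?lt0n ?prime_gt0 // => /maxw.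
by rewrite ltnn.
Qed.

Lemma dvdz_deriv_poly_iter (G : {poly int}) x q m : (q %| G.[x] - x)%Z ->
  (q %| (poly_iter G m)^`().[x] - G^`().[x] ^+ m)%Z.
Proof.
move=> q_dvd_disp; elim: m => [|m IH]; first by rewrite /= derivX hornerC subrr.
rewrite /= -/(poly_iter G m) deriv_comp hornerM horner_comp.
set P := poly_iter G m in IH *.
have G'_eq : (q %| G^`().[P.[x]] - G^`().[x])%Z.
  apply: dvdz_trans (dvdz_horner_sub _ _ _).
  by rewrite horner_poly_iter dvdz_iter_sub.
have -> : G^`().[P.[x]] * P^`().[x] - G^`().[x] ^+ m.+1 =
    (G^`().[P.[x]] - G^`().[x]) * P^`().[x] + G^`().[x] * (P^`().[x] - G^`().[x] ^+ m).
  by rewrite exprS; ring.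
by apply: rpredD; [apply: dvdz_mulr | apply: dvdz_mull].
Qed.

Lemma is_max_cong_exp_iter_pexp p (T : {poly int}) x L v :
    prime p -> (3 < p)%N -> (0 < v)%N ->
    (p%:Z %| (poly_iter T L)^`().[x] - 1)%Z ->
    is_max_cong_exp p (iter L (horner T) x) x v ->
  forall s, is_max_cong_exp p (iter (L * p ^ s) (horner T) x) x (v + s).
Proof.
move=> p_prime p_gt3 v_gt0 q_dvd_G'1 maxv.
have q_dvd_disp : (p%:Z %| (poly_iter T L).[x] - x)%Z.
  case/is_max_cong_expE: maxv => qv_dvd _.
  by rewrite horner_poly_iter (dvdz_trans _ qv_dvd) // dvdz_exp.
elim=> [|s IH]; first by rewrite expn0 muln1 addn0.
pose H := poly_iter T (L * p ^ s).
have HE y : H.[y] = iter (L * p ^ s) (horner T) y by rewrite horner_poly_iter.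
have H'_eq1 : (p%:Z %| H^`().[x] - 1)%Z.
  set G'x := (poly_iter T L)^`().[x].
  have G'_pow1 : (p%:Z %| G'x ^+ (p ^ s)%N - 1)%Z by rewrite subrX1 dvdz_mulr.
  rewrite -[_ - 1](subrKA (G'x ^+ (p ^ s)%N)) /H poly_iterM.
  exact: rpredD (dvdz_deriv_poly_iter _ q_dvd_disp) G'_pow1.
have := is_max_cong_exp_iter_prime p_prime p_gt3 (ltn_addr s v_gt0) H'_eq1.
rewrite HE => /(_ IH).
by rewrite addnS (eq_iter HE) -iterM expnS mulnCA.
Qed.

(** * The period modulo p^k *)

Lemma iter_horner_poly_iter (T : {poly int}) m j y :
  iter j (horner (poly_iter T m)) y = iter (m * j) (horner T) y.
Proof. by rewrite mulnC iterM; apply: eq_iter => z; rewrite horner_poly_iter. Qed.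

Section PeriodLift.
Variables (p : nat) (T : {poly int}) (x : int) (N l v : nat).
Local Notation q := p%:Z.
Local Notation F := (poly_iter T N).
Hypotheses (p_prime : prime p) (p_gt3 : (3 < p)%N).
Hypotheses (perN : is_iter_period (horner T) q x N)
  (ord_l : is_mult_order (F^`().[x]) q l)
  (maxv : is_max_cong_exp p (iter (N * l) (horner T) x) x v).

Lemma dvdz_period_disp : (q %| F.[x] - x)%Z.
Proof. by case: perN => _ [retN _]; rewrite horner_poly_iter -eqz_mod_dvd. Qed.

Lemma max_cong_exp_gt0 : (0 < v)%N.
Proof.
case/is_max_cong_expE: maxv => _; apply; rewrite expr1.
by rewrite -iter_horner_poly_iter dvdz_iter_sub // dvdz_period_disp.
Qed.

Lemma dvdz_deriv_poly_iter_order : (q %| (poly_iter T (N * l))^`().[x] - 1)%Z.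
Proof.
case: ord_l => _ [retl _]; move: retl; rewrite eqz_mod_dvd => retl.
have F'_eq := dvdz_deriv_poly_iter l dvdz_period_disp.
by rewrite poly_iterM -[_ - 1](subrKA (F^`().[x] ^+ l)) (rpredD F'_eq retl).
Qed.

Lemma period_order_dvd_of_return M :
  (q ^+ v %| iter M (horner T) x - x)%Z -> (N * l %| M)%N.
Proof.
move=> qv_retM.
have q_retM : (iter M (horner T) x == x %[mod q])%Z.
  by rewrite eqz_mod_dvd (dvdz_trans (dvdz_exp max_cong_exp_gt0 (dvdzz q)) qv_retM).
have /dvdnP [m M_eq] : (N %| M)%N.
  by rewrite -(iter_period_dvd (@horner_eqz_mod T q) M perN).
rewrite {}M_eq mulnC in qv_retM *; rewrite dvdn_pmul2l; last by case: perN.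
case/is_max_cong_expE: maxv => _ maxv'.
apply: (order_dvd_of_iter_return p_prime dvdz_period_disp ord_l (v := v)).
  by rewrite iter_horner_poly_iter => /maxv'; rewrite ltnn.
by rewrite iter_horner_poly_iter.
Qed.

Theorem is_iter_period_lift k : (v <= k)%N ->
  is_iter_period (horner T) (p ^ k)%:Z x (N * l * p ^ (k - v)).
Proof.
move=> le_vk.
have exact_val := is_max_cong_exp_iter_pexp p_prime p_gt3 max_cong_exp_gt0
  dvdz_deriv_poly_iter_order maxv.
have [N_gt0 _] := perN; have [l_gt0 _] := ord_l.
have R_gt0 : (0 < N * l * p ^ (k - v))%N by rewrite !muln_gt0 N_gt0 l_gt0 expn_gt0 prime_gt0.
have retR : (iter (N * l * p ^ (k - v)) (horner T) x == x %[mod (p ^ k)%:Z])%Z.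
  by case/is_max_cong_expE: (exact_val (k - v)%N) => + _; rewrite subnKC // eqz_mod_dvd PoszX.
have [P perP] := exists_iter_period R_gt0 retR.
have P_dvd_R : (P %| N * l * p ^ (k - v))%N.
  by rewrite -(iter_period_dvd (@horner_eqz_mod T _) _ perP).
have [_ [retP _]] := perP; rewrite eqz_mod_dvd PoszX in retP.
have /dvdnP [r P_eq] : (N * l %| P)%N.
  exact/period_order_dvd_of_return/(dvdz_trans (dvdz_exp2l _ le_vk)).
have Nl_gt0 : (0 < N * l)%N by rewrite muln_gt0 N_gt0.
have /(dvdn_pfactor _ _ p_prime) [s _ r_eq] : (r %| p ^ (k - v))%N.
  by move: P_dvd_R; rewrite P_eq mulnC dvdn_pmul2l.
have le_k_vs : (k <= v + s)%N.
  case/is_max_cong_expE: (exact_val s) => _; apply.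
  by move: retP; rewrite P_eq r_eq mulnC.
suff -> : (N * l * p ^ (k - v) = P)%N by [].
apply/eqP; rewrite eqn_dvd P_dvd_R andbT P_eq r_eq mulnC.
by rewrite dvdn_pmul2r // dvdn_exp2l // leq_subLR.
Qed.
End PeriodLift.

Theorem theorem1 (p n k : nat) (x : int) (N l v : nat) :
  prime p -> (3 < p)%N -> (1 < n)%N ->
  coprime n p -> coprime n (p ^ 2 - 1) ->
  (0 < k)%N -> 2 <= x -> x <= (p ^ k)%:Z - 1 ->
  is_least_period n p%:Z x N ->
  is_mult_order ((cheb (n ^ N))^`().[x]) p%:Z l ->
  is_max_cong_exp p (cheb_iter n (N * l) x) x v ->
  (v <= k)%N ->
  is_least_period n (p ^ k)%:Z x (N * l * p ^ (k - v)).
Proof.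
move=> p_prime p_gt3 _ _ _ _ _ _ perN ord_l maxv le_vk.
rewrite -poly_iter_cheb in ord_l.
exact: (@is_iter_period_lift p (cheb n) x N l v p_prime p_gt3 perN ord_l maxv k le_vk).
Qed.
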